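(* Let $S\subset\mathbb{E}^d$ be a compact set such that $\operatorname{cl}(\operatorname{int} S)=S$ and $\operatorname{int} S$ is connected. Assume that $x\in S$ is a spindle peak of $S$. Then $x\in\ker_{\mathrm{s}} S$ (in particular, $S$ is spindle starshaped).
   Context: For $x,y\in\mathbb{E}^d$ the spindle $[x,y]_{\mathrm{s}}$ is the intersection of all closed unit balls containing $x$ and $y$ if $|x-y|\le2$, and $\mathbb{E}^d$ otherwise. For $p\in S$, $\operatorname{st}_{\mathrm{s}}(p)=\operatorname{st}_{\mathrm{s}}(p,S)=\{q\in S:[p,q]_{\mathrm{s}}\subseteq S\}$; $\ker_{\mathrm{s}}S=\{p\in S:\operatorname{st}_{\mathrm{s}}(p,S)=S\}$; $S$ is spindle starshaped if $\ker_{\mathrm{s}}S\ne\emptyset$. A point $x\in S$ is a spindle peak of $S$ if there is a neighborhood $U$ of $x$ such that $\operatorname{st}_{\mathrm{s}}(x',S)\subseteq\operatorname{st}_{\mathrm{s}}(x,S)$ for every $x'\in U\cap S$. *)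

From HB Require Import structures.
From mathcomp Require Import all_boot all_order all_algebra.
From mathcomp Require Import all_classical all_reals all_analysis.
Set Implicit Arguments. Unset Strict Implicit. Unset Printing Implicit Defensive.
Import Order.TTheory GRing.Theory Num.Theory.
Import numFieldNormedType.Exports.
Local Open Scope classical_set_scope.
Local Open Scope ring_scope.

(* Euclidean space E^d is modelled as 'rV[R]_d (R : realType) with its
   standard (product = Euclidean) topology; metric notions use the
   Euclidean norm enorm below. *)
Definition enorm (R : realType) (d : nat) (x : 'rV[R]_d) : R :=
  Num.sqrt (\sum_(i < d) x ord0 i ^+ 2).

Definition unit_cball (R : realType) (d : nat) (c : 'rV[R]_d) : set 'rV[R]_d :=
  [set z | enorm (z - c) <= 1].

Definition spindle (R : realType) (d : nat) (x y : 'rV[R]_d) : set 'rV[R]_d :=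
  if enorm (x - y) <= 2 then
    [set z | forall c, unit_cball c x -> unit_cball c y -> unit_cball c z]
  else setT.

Definition spindle_star (R : realType) (d : nat) (p : 'rV[R]_d) (S : set 'rV[R]_d)
  : set 'rV[R]_d := [set q | S q /\ spindle p q `<=` S].

Definition spindle_ker (R : realType) (d : nat) (S : set 'rV[R]_d) : set 'rV[R]_d :=
  [set p | S p /\ spindle_star p S = S].

Definition spindle_starshaped (R : realType) (d : nat) (S : set 'rV[R]_d) : Prop :=
  spindle_ker S !=set0.

Definition spindle_peak (R : realType) (d : nat) (S : set 'rV[R]_d) (x : 'rV[R]_d)
  : Prop :=
  S x /\ exists U, nbhs x U /\
    (forall x', U x' -> S x' -> spindle_star x' S `<=` spindle_star x S).

From HB Require Import structures.
From mathcomp Require Import all_boot all_order all_algebra.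
From mathcomp Require Import all_classical all_reals all_analysis.
From mathcomp Require Import ring lra zify.
Import Order.TTheory GRing.Theory Num.Theory.
Import numFieldNormedType.Exports.
Local Open Scope classical_set_scope.
Local Open Scope ring_scope.

(* Let [A] be the set of interior points [y] of [S] with [[x, y]_s] contained
   in [S].  Interior points close to [x] lie in [A]: [y] belongs to its own
   spindle star, hence to that of the peak [x].  [A] is open and closed in
   the connected set [int S]: if [[x, y0]_s] lies in [S] and a ball around
   [y0] lies in [S], then translating by a small [v] the subspindle
   [[x + t (y0 - x), y0]_s] keeps it inside [S] (near [y0] it stays in the
   ball, elsewhere it stays in [[x, y0]_s] since shortening a spindle leaves
   a margin away from its tips), so the peak property applied at
   [x + t (y0 - x) + v] gives [[x, y0 + v]_s] inside [S].  Hence [A = int S],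
   and since every point of [[x, q]_s] is a limit of points of spindles
   [[x, y]_s] with [y] interior and close to [q], closedness of
   [S = cl (int S)] gives [[x, q]_s] inside [S] for every [q] in [S]. *)

Ltac vec_eq := apply/rowP => ?; rewrite !mxE; ring.

Section EuclideanNorm.
Context {R : realType} {d : nat}.
Implicit Types (u v w : 'rV[R]_d).

Definition dot u v : R := \sum_(i < d) u ord0 i * v ord0 i.

Lemma dotC u v : dot u v = dot v u.
Proof. by apply: eq_bigr => i _; rewrite mulrC. Qed.

Lemma dotDl u v w : dot (u + v) w = dot u w + dot v w.
Proof. by rewrite /dot -big_split; apply: eq_bigr => i _; rewrite !mxE mulrDl. Qed.

Lemma dotZl k u v : dot (k *: u) v = k * dot u v.
Proof. by rewrite /dot mulr_sumr; apply: eq_bigr => i _; rewrite !mxE mulrA. Qed.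

Lemma dotNl u v : dot (- u) v = - dot u v.
Proof. by rewrite -scaleN1r dotZl mulN1r. Qed.

Lemma dotBl u v w : dot (u - v) w = dot u w - dot v w.
Proof. by rewrite dotDl dotNl. Qed.

Lemma dotDr u v w : dot w (u + v) = dot w u + dot w v.
Proof. by rewrite dotC dotDl !(dotC w). Qed.

Lemma dotZr k u v : dot v (k *: u) = k * dot v u.
Proof. by rewrite dotC dotZl dotC. Qed.

Lemma dotNr u v : dot v (- u) = - dot v u.
Proof. by rewrite dotC dotNl dotC. Qed.

Lemma dotBr u v w : dot w (u - v) = dot w u - dot w v.
Proof. by rewrite dotDr dotNr. Qed.

Lemma dot0l v : dot 0 v = 0.
Proof. by rewrite /dot big1 // => i _; rewrite mxE mul0r. Qed.

Lemma dotvv_ge0 v : 0 <= dot v v.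
Proof. by apply: sumr_ge0 => i _; rewrite -expr2 sqr_ge0. Qed.

Lemma dotvv_eq0 v : dot v v = 0 -> v = 0.
Proof.
move=> v0; apply/rowP => i; rewrite mxE.
have sq_ge0 j : (true : bool) -> 0 <= v ord0 j * v ord0 j.
  by rewrite -expr2 sqr_ge0.
have /eqP := psumr_eq0P sq_ge0 v0 (i := i) isT.
by rewrite mulf_eq0 orbb => /eqP.
Qed.

Lemma dot_lincomb p q u v :
  dot (p *: u + q *: v) (p *: u + q *: v) =
  p ^+ 2 * dot u u + 2 * p * q * dot u v + q ^+ 2 * dot v v.
Proof. by rewrite !(dotDl, dotDr, dotZl, dotZr) (dotC v u); ring. Qed.

Lemma enormE v : enorm v = Num.sqrt (dot v v).
Proof. by rewrite /enorm /dot; congr Num.sqrt; apply: eq_bigr => i _; rewrite expr2. Qed.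

Lemma enorm_ge0 v : 0 <= enorm v.
Proof. by rewrite enormE sqrtr_ge0. Qed.

Lemma enorm_sq v : enorm v ^+ 2 = dot v v.
Proof. by rewrite enormE sqr_sqrtr // dotvv_ge0. Qed.

Lemma enorm_eq0 v : enorm v = 0 -> v = 0.
Proof. by move=> v0; apply: dotvv_eq0; rewrite -enorm_sq v0 expr0n. Qed.

Lemma enorm_gt0 v : v != 0 -> 0 < enorm v.
Proof.
move=> v0; rewrite lt_def enorm_ge0 andbT.
by apply: contra_neq v0; apply: enorm_eq0.
Qed.

Lemma enorm0 : enorm (0 : 'rV[R]_d) = 0.
Proof. by rewrite enormE dot0l sqrtr0. Qed.

Lemma enorm_leP v r : 0 <= r -> (enorm v <= r) <-> (dot v v <= r ^+ 2).
Proof.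
move=> r0; split => vr; first by have := enorm_ge0 v; rewrite -enorm_sq; nra.
by rewrite enormE -(ger0_norm r0) -sqrtr_sqr; apply: ler_wsqrtr.
Qed.

Lemma enorm_ltP v r : 0 <= r -> (enorm v < r) <-> (dot v v < r ^+ 2).
Proof.
move=> r0; have := enorm_ge0 v; rewrite -enorm_sq => v0.
by split => vr; [nra | rewrite ltNge; apply/negP => rv; nra].
Qed.

Lemma enorm_le1 v : (enorm v <= 1) <-> (dot v v <= 1).
Proof. by rewrite enorm_leP ?ler01 // expr1n. Qed.

Lemma dot_le_enorm u v : dot u v <= enorm u * enorm v.
Proof.
have [->|u0] := eqVneq u 0; first by rewrite dot0l mulr_ge0 ?enorm_ge0.
have [->|v0] := eqVneq v 0; first by rewrite dotC dot0l mulr_ge0 ?enorm_ge0.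
have a0 : 0 < enorm u by exact: enorm_gt0.
have b0 : 0 < enorm v by exact: enorm_gt0.
have := dotvv_ge0 (enorm v *: u + (- enorm u) *: v).
rewrite dot_lincomb -!enorm_sq.
move: a0 b0; set a := enorm u; set b := enorm v; set t := dot u v => a0 b0 sq_ge0.
have ab0 : 0 < a * b by apply: mulr_gt0.
rewrite -(ler_pM2l ab0); nra.
Qed.

Lemma normr_dot_le u v : `|dot u v| <= enorm u * enorm v.
Proof.
have Nu : enorm (- u) = enorm u by rewrite !enormE dotNl dotNr opprK.
rewrite ler_norml dot_le_enorm andbT lerNl -dotNl -Nu.
exact: dot_le_enorm.
Qed.

Lemma enormD u v : enorm (u + v) <= enorm u + enorm v.
Proof.
apply/enorm_leP; first by rewrite addr_ge0 ?enorm_ge0.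
have := dot_lincomb 1 1 u v; rewrite !scale1r => ->.
have := dot_le_enorm u v; rewrite -!enorm_sq; nra.
Qed.

Lemma enormZ k v : enorm (k *: v) = `|k| * enorm v.
Proof. by rewrite !enormE dotZl dotZr mulrA -expr2 sqrtrM ?sqr_ge0 // sqrtr_sqr. Qed.

Lemma enormBC u v : enorm (u - v) = enorm (v - u).
Proof. by rewrite -opprB -scaleN1r enormZ normrN1 mul1r. Qed.

Lemma enormB_trans u v w : enorm (u - w) <= enorm (u - v) + enorm (v - w).
Proof.
have -> : u - w = (u - v) + (v - w) by rewrite addrA subrK.
exact: enormD.
Qed.

Lemma enorm_conic (k1 k2 : R) u v : 0 <= k1 -> 0 <= k2 ->
  enorm (k1 *: u + k2 *: v) <= k1 * enorm u + k2 * enorm v.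
Proof.
by move=> k10 k20; apply: le_trans (enormD _ _) _; rewrite !enormZ !ger0_norm.
Qed.

End EuclideanNorm.

Section SpindleBasics.
Context {R : realType} {d : nat}.
Implicit Types (a b c v w y : 'rV[R]_d).

Lemma spindleE a b w : enorm (a - b) <= 2 ->
  spindle a b w <->
  (forall c, enorm (a - c) <= 1 -> enorm (b - c) <= 1 -> enorm (w - c) <= 1).
Proof. by move=> ab; rewrite /spindle ab. Qed.

Lemma spindle_far a b : ~~ (enorm (a - b) <= 2) -> spindle a b = setT.
Proof. by move=> ab; rewrite /spindle (negbTE ab). Qed.

Lemma spindle_l a b : enorm (a - b) <= 2 -> spindle a b a.
Proof. by move=> ab; apply/spindleE. Qed.

Lemma spindle_sub_ball a b y rho w : 0 <= rho -> rho <= 1 ->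
  enorm (a - y) <= rho -> enorm (b - y) <= rho -> spindle a b w ->
  enorm (w - y) <= rho.
Proof.
move=> rho0 rho1 ay by_ /spindleE spin.
have ab : enorm (a - b) <= 2.
  by apply: le_trans (enormB_trans a y b) _; rewrite (enormBC y b); lra.
have {}spin := spin ab.
rewrite leNgt; apply/negP => wy.
set n := enorm (w - y) in wy.
have n0 : 0 < n by apply: le_lt_trans wy.
set e := n^-1 *: (w - y).
have e1 : enorm e = 1.
  by rewrite /e enormZ ger0_norm ?invr_ge0 ?ltW // mulVf // gt_eqF.
(* B(c, 1) contains B(y, rho) but not w. *)
set c := y - (1 - rho) *: e.
have Bc z : enorm (z - y) <= rho -> enorm (z - c) <= 1.
  move=> zy; have -> : z - c = (z - y) + (1 - rho) *: e by vec_eq.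
  by apply: le_trans (enormD _ _) _; rewrite enormZ e1 ger0_norm; lra.
have := spin c (Bc a ay) (Bc b by_).
have -> : w - c = (n + (1 - rho)) *: e.
  by rewrite /c /e; apply/rowP => i; rewrite !mxE; field; exact: lt0r_neq0.
by rewrite enormZ e1 ger0_norm; lra.
Qed.

Lemma spindle_refl a w : spindle a a w -> w = a.
Proof.
move=> aaw; have := spindle_sub_ball a a a 0 w (lexx 0) ler01.
rewrite subrr enorm0 => /(_ (lexx _) (lexx _) aaw) wa.
by apply/eqP; rewrite -subr_eq0; apply/eqP/enorm_eq0/le_anti; rewrite wa enorm_ge0.
Qed.

Lemma spindle_translate a b v w : spindle (a + v) (b + v) w -> spindle a b (w - v).
Proof.
have E p q : enorm ((p + v) - (q + v)) = enorm (p - q) by congr enorm; vec_eq.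
have [ab|ab] := boolP (enorm (a - b) <= 2); last by rewrite (spindle_far _ _ ab).
move/spindleE; rewrite E => /(_ ab) spin; apply/spindleE => // c ac bc.
have := spin (c + v); rewrite !E => /(_ ac bc).
by have -> : w - (c + v) = (w - v) - c by vec_eq.
Qed.

Lemma spindle_axis a b : a != b ->
  exists m u, [/\ dot u u = 1, a = m - (enorm (b - a) / 2) *: u &
                 b = m + (enorm (b - a) / 2) *: u].
Proof.
move=> ab; have n0 : enorm (b - a) != 0.
  by rewrite gt_eqF // enorm_gt0 // subr_eq0 eq_sym.
exists (2^-1 *: (a + b)), ((enorm (b - a))^-1 *: (b - a)); split.
- by rewrite dotZl dotZr -enorm_sq; field.
- by apply/rowP => i; rewrite !mxE; field.
- by apply/rowP => i; rewrite !mxE; field.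
Qed.

End SpindleBasics.

Section Orthogonality.
Context {R : realType} {d : nat}.
Implicit Types (p q u z : 'rV[R]_d).

Lemma dot_orth_add p u k : dot p u = 0 -> dot u u = 1 ->
  dot (p + k *: u) (p + k *: u) = dot p p + k ^+ 2.
Proof.
by move=> pu uu; rewrite !(dotDl, dotDr, dotZl, dotZr) (dotC u p) pu uu; ring.
Qed.

Lemma dot_subvv p q : dot (p - q) (p - q) = dot p p - 2 * dot p q + dot q q.
Proof. by rewrite !(dotBl, dotBr) (dotC q p); ring. Qed.

Lemma dot_scale_unit u k : dot u u = 1 -> dot (k *: u) (k *: u) = k ^+ 2.
Proof. by move=> uu; rewrite dotZl dotZr uu; ring. Qed.

Lemma dot_reject_orth z u : dot u u = 1 -> dot (z - dot z u *: u) u = 0.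
Proof. by move=> uu; rewrite dotBl dotZl uu mulr1 subrr. Qed.

Lemma enorm_unit u : dot u u = 1 -> enorm u = 1.
Proof. by move=> uu; rewrite enormE uu sqrtr1. Qed.

End Orthogonality.

Lemma sqrt1_subsqr {R : realType} {L : R} : 0 <= L -> L <= 1 ->
  0 <= Num.sqrt (1 - L ^+ 2) /\ Num.sqrt (1 - L ^+ 2) ^+ 2 = 1 - L ^+ 2.
Proof. by move=> ? ?; split; [exact: sqrtr_ge0 | rewrite sqr_sqrtr //; nra]. Qed.

Definition axial {R : realType} {d : nat} (m u w : 'rV[R]_d) : R := dot (w - m) u.

Definition radial {R : realType} {d : nat} (m u w : 'rV[R]_d) : R :=
  enorm ((w - m) - axial m u w *: u).

(* The spindle of [m - L u] and [m + L u] is swept by an arc of a unit circle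
   whose centre is at distance [sqrt (1 - L^2)] from the axis. *)
Definition in_lens {R : realType} {d : nat} (m u : 'rV[R]_d) (L : R) (w : 'rV[R]_d) :=
  axial m u w ^+ 2 + (radial m u w + Num.sqrt (1 - L ^+ 2)) ^+ 2 <= 1.

Section AxisCoordinates.
Context {R : realType} {d : nat}.
Variables (m u : 'rV[R]_d) (L : R).
Implicit Types (c p q w : 'rV[R]_d).

Lemma enorm_axis : dot u u = 1 -> 0 <= L ->
  enorm ((m - L *: u) - (m + L *: u)) = 2 * L.
Proof.
move=> uu L0; have -> : (m - L *: u) - (m + L *: u) = (- (2 * L)) *: u by vec_eq.
by rewrite enormZ enorm_unit // mulr1 normrN ger0_norm // mulr_ge0.
Qed.

Lemma spindle_axisE w : dot u u = 1 -> 0 <= L -> L <= 1 ->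
  spindle (m - L *: u) (m + L *: u) w <->
  forall c, dot (m - L *: u - c) (m - L *: u - c) <= 1 ->
    dot (m + L *: u - c) (m + L *: u - c) <= 1 -> dot (w - c) (w - c) <= 1.
Proof.
move=> uu L0 L1.
have ab : enorm ((m - L *: u) - (m + L *: u)) <= 2 by rewrite enorm_axis //; lra.
rewrite (spindleE _ _ w ab).
split=> spin c /enorm_le1 ac /enorm_le1 bc; apply/enorm_le1; exact: spin.
Qed.

Lemma spindle_axial_le w : dot u u = 1 -> 0 <= L -> L <= 1 ->
  spindle (m - L *: u) (m + L *: u) w -> - L <= axial m u w <= L.
Proof.
move=> uu L0 L1 /(spindle_axisE w uu L0 L1) spin.
set s := axial m u w; set p := (w - m) - s *: u.
have pu : dot p u = 0 by apply: dot_reject_orth.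
have p0 := dotvv_ge0 p.
apply/andP; split.
- have := spin (m - (L - 1) *: u).
  have -> : m - L *: u - (m - (L - 1) *: u) = (- 1) *: u by vec_eq.
  have -> : m + L *: u - (m - (L - 1) *: u) = (2 * L - 1) *: u by vec_eq.
  have -> : w - (m - (L - 1) *: u) = p + (s - 1 + L) *: u by rewrite /p; vec_eq.
  by rewrite !dot_scale_unit // dot_orth_add // => /(_ ltac:(nra) ltac:(nra)); nra.
- have := spin (m + (L - 1) *: u).
  have -> : m - L *: u - (m + (L - 1) *: u) = (1 - 2 * L) *: u by vec_eq.
  have -> : m + L *: u - (m + (L - 1) *: u) = 1 *: u by vec_eq.
  have -> : w - (m + (L - 1) *: u) = p + (s + 1 - L) *: u by rewrite /p; vec_eq.
  by rewrite !dot_scale_unit // dot_orth_add // => /(_ ltac:(nra) ltac:(nra)); nra.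
Qed.

Lemma spindle_in_lens w : dot u u = 1 -> 0 <= L -> L <= 1 ->
  spindle (m - L *: u) (m + L *: u) w -> in_lens m u L w.
Proof.
move=> uu L0 L1 spin_w; rewrite /in_lens.
set s := axial m u w; set al := radial m u w.
have /andP[sL1 sL2] : - L <= s <= L := spindle_axial_le w uu L0 L1 spin_w.
move/(spindle_axisE w uu L0 L1): spin_w => spin.
set p := (w - m) - s *: u.
have pu : dot p u = 0 by apply: dot_reject_orth.
have pp : dot p p = al ^+ 2 by rewrite enorm_sq.
have al0 : 0 <= al by apply: enorm_ge0.
have [h0 hh] := sqrt1_subsqr L0 L1; set h := Num.sqrt _ in h0 hh *.
have [->|al_neq0] := eqVneq al 0; first by rewrite add0r hh; nra.
have al_gt0 : 0 < al by rewrite lt_def al_neq0 al0.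
(* the centre at distance [h] from the axis, on the side opposite to [w] *)
have := spin (m - (h / al) *: p).
have -> : m - L *: u - (m - (h / al) *: p) = (h / al) *: p + (- L) *: u by vec_eq.
have -> : m + L *: u - (m - (h / al) *: p) = (h / al) *: p + L *: u by vec_eq.
have -> : w - (m - (h / al) *: p) = (1 + h / al) *: p + s *: u by rewrite /p; vec_eq.
rewrite !dot_lincomb pp pu uu.
have -> : (h / al) ^+ 2 * al ^+ 2 = h ^+ 2 by field; exact: lt0r_neq0.
have -> : (1 + h / al) ^+ 2 * al ^+ 2 = (al + h) ^+ 2 by field; exact: lt0r_neq0.
by move=> /(_ ltac:(nra) ltac:(nra)); nra.
Qed.

Lemma in_lens_spindle w : dot u u = 1 -> 0 <= L -> L <= 1 ->
  in_lens m u L w -> spindle (m - L *: u) (m + L *: u) w.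
Proof.
move=> uu L0 L1; rewrite /in_lens => lens; apply/spindle_axisE => // c ac bc.
set s := axial m u w in lens; set al := radial m u w in lens.
set p := (w - m) - s *: u.
have pu : dot p u = 0 by apply: dot_reject_orth.
have pp : dot p p = al ^+ 2 by rewrite enorm_sq.
have al0 : 0 <= al by apply: enorm_ge0.
have [h0 hh] := sqrt1_subsqr L0 L1; set h := Num.sqrt (1 - L ^+ 2) in h0 hh lens.
set sg := axial m u c; set q := (c - m) - sg *: u; set be := enorm q.
have qu : dot q u = 0 by apply: dot_reject_orth.
have qq : dot q q = be ^+ 2 by rewrite enorm_sq.
have be0 : 0 <= be by apply: enorm_ge0.
move: ac bc.
have -> : m - L *: u - c = - q + (- (sg + L)) *: u by rewrite /q; vec_eq.
have -> : m + L *: u - c = - q + (L - sg) *: u by rewrite /q; vec_eq.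
have -> : w - c = (p - q) + (s - sg) *: u by rewrite /p /q; vec_eq.
have qu' : dot (- q) u = 0 by rewrite dotNl qu oppr0.
have pqu : dot (p - q) u = 0 by rewrite dotBl pu qu subrr.
rewrite !dot_orth_add // dotNl dotNr opprK qq dot_subvv pp qq => ac bc.
have pq : - dot p q <= al * be.
  by rewrite lerNl; have := normr_dot_le p q; rewrite ler_norml => /andP[].
have be_h : be <= h.
  have : be ^+ 2 <= h ^+ 2 by move: ac bc; rewrite hh; nra.
  nra.
have ab_ah : al * be <= al * h by apply: ler_wpM2l.
have sL : - L <= s <= L by apply/andP; split; nra.
have [sg0|sg0] := leP 0 sg.
- have : 0 <= (L + s) * sg by apply: mulr_ge0; lra.
  nra.
- have : 0 <= (L - s) * (- sg) by apply: mulr_ge0; lra.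
  nra.
Qed.

End AxisCoordinates.

Section LensEstimates.
Context {R : realType}.

Lemma disk_perturb (s A k a e : R) : 0 <= e -> e <= 1 -> `|k| <= e ->
  0 <= A -> 0 <= a -> a <= A + e -> s ^+ 2 + A ^+ 2 + 6 * e <= 1 ->
  (s + k) ^+ 2 + a ^+ 2 <= 1.
Proof.
move=> e0 e1 /[!ler_norml] /andP[k1 k2] A0 a0 aA sA.
have s1 : -1 <= s <= 1 by apply/andP; split; nra.
have A1 : A <= 1 by nra.
have : (s + k) ^+ 2 <= s ^+ 2 + 3 * e by case/andP: s1 => ? ?; nra.
have : a ^+ 2 <= A ^+ 2 + 3 * e by nra.
lra.
Qed.

(* [s'] and [al'] are the coordinates of a point of the lens of half-length
   [(1 - t) L] centred at [t L] on the axis, which shares its right tip with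
   the lens of half-length [L] centred at [0]; the point is at distance at
   least [r] from that tip, and [h], [h'] are the distances from the axis to
   the centres of the generating circles.  The conclusion bounds from below
   the margin by which the point lies inside the longer lens. *)
Lemma lens_shrink_margin {s' al' h h' L t r : R} :
  0 < L -> L <= 1 -> 0 < t -> t < 1 -> 0 < r ->
  0 <= al' -> 0 <= h -> 0 <= h' ->
  h ^+ 2 = 1 - L ^+ 2 -> h' ^+ 2 = 1 - ((1 - t) * L) ^+ 2 ->
  s' <= (1 - t) * L -> s' ^+ 2 + (al' + h') ^+ 2 <= 1 ->
  r ^+ 2 <= (s' - (1 - t) * L) ^+ 2 + al' ^+ 2 ->
  t * L ^+ 2 * r <= 1 - (s' + t * L) ^+ 2 - (al' + h) ^+ 2.
Proof.
move=> L0 L1 t0 t1 r0 al'0 h0 h'0 hh hh' s1 lens' far.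
set L' := (1 - t) * L in hh' s1 lens' far.
have tL0 : 0 <= t * L ^+ 2 by rewrite mulr_ge0 ?sqr_ge0 ?ltW.
have dh : (h' - h) * (h' + h) = t * L ^+ 2 * (2 - t).
  by rewrite -subr_sqr hh hh' /L'; ring.
have h_le : h <= h'.
  rewrite leNgt; apply/negP => h'h.
  have : 0 <= t * L ^+ 2 * (2 - t) by rewrite mulr_ge0 //; lra.
  nra.
have h'1 : h' <= 1 by nra.
have tL_dh : t * L ^+ 2 <= 2 * (h' - h).
  have : t * L ^+ 2 <= t * L ^+ 2 * (2 - t) by nra.
  have : (h' - h) * (h' + h) <= (h' - h) * 2 by apply: ler_wpM2l; lra.
  lra.
have r_le : r <= (L' - s') + al'.
  rewrite leNgt; apply/negP => H.
  have : ((L' - s') + al') ^+ 2 < r ^+ 2 by rewrite ltrXn2r //; lra.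
  nra.
have margin : 2 * t * L * (L' - s') + 2 * al' * (h' - h) <=
              1 - (s' + t * L) ^+ 2 - (al' + h) ^+ 2.
  have E : 1 - (s' + t * L) ^+ 2 - (al' + h) ^+ 2 -
           (2 * t * L * (L' - s') + 2 * al' * (h' - h)) =
           (1 - s' ^+ 2 - (al' + h') ^+ 2) + (h' ^+ 2 - h ^+ 2 - t * L ^+ 2 * (2 - t)).
    by rewrite /L'; ring.
  have : h' ^+ 2 - h ^+ 2 = t * L ^+ 2 * (2 - t) by rewrite -dh; ring.
  lra.
have : t * L ^+ 2 * (L' - s') <= 2 * t * L * (L' - s').
  have : 0 <= (t * L * (2 - L)) * (L' - s') by rewrite !mulr_ge0 //; lra.
  lra.
have : al' * (t * L ^+ 2) <= 2 * al' * (h' - h).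
  have : 0 <= al' * (2 * (h' - h) - t * L ^+ 2) by rewrite mulr_ge0 //; lra.
  lra.
have : t * L ^+ 2 * r <= t * L ^+ 2 * ((L' - s') + al') by apply: ler_wpM2l.
lra.
Qed.

End LensEstimates.

Section AxisShift.
Context {R : realType} {d : nat}.
Variables (m u : 'rV[R]_d).
Hypothesis uu : dot u u = 1.
Implicit Types (v w : 'rV[R]_d).

Lemma axial_shift c w : axial (m + c *: u) u w = axial m u w - c.
Proof.
by rewrite /axial (_ : w - (m + c *: u) = (w - m) - c *: u) ?dotBl ?dotZl ?uu ?mulr1 //; vec_eq.
Qed.

Lemma radial_shift c w : radial (m + c *: u) u w = radial m u w.
Proof. by rewrite /radial axial_shift; congr enorm; vec_eq. Qed.

Lemma axialD w v : axial m u (w + v) = axial m u w + dot v u.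
Proof. by rewrite /axial -dotDl; congr dot; vec_eq. Qed.

Lemma radialD_le w v : radial m u (w + v) <= radial m u w + enorm v.
Proof.
rewrite /radial axialD.
have -> : w + v - m - (axial m u w + dot v u) *: u =
          (w - m - axial m u w *: u) + (v - dot v u *: u) by vec_eq.
apply: le_trans (enormD _ _) _; rewrite lerD2l.
apply/enorm_leP; first exact: enorm_ge0.
rewrite enorm_sq dot_subvv dot_scale_unit // dotZr.
by have := sqr_ge0 (dot v u); lra.
Qed.

Lemma dist_axis_sq c w :
  dot (w - (m + c *: u)) (w - (m + c *: u)) = (axial m u w - c) ^+ 2 + radial m u w ^+ 2.
Proof.
have -> : w - (m + c *: u) = (w - m - axial m u w *: u) + (axial m u w - c) *: u by vec_eq.
by rewrite dot_orth_add ?dot_reject_orth // enorm_sq addrC.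
Qed.

End AxisShift.

Lemma spindle_shrink_perturb {R : realType} {d : nat} (m u w v : 'rV[R]_d) (L t r : R) :
  dot u u = 1 -> 0 < L -> L <= 1 -> 0 < t -> t < 1 -> 0 < r ->
  spindle (m + (t * L) *: u - ((1 - t) * L) *: u)
          (m + (t * L) *: u + ((1 - t) * L) *: u) w ->
  r <= enorm (w - (m + L *: u)) ->
  enorm v <= 1 -> 6 * enorm v <= t * L ^+ 2 * r ->
  spindle (m - L *: u) (m + L *: u) (w + v).
Proof.
move=> uu L0 L1 t0 t1 r0 spin_w far v1 v_small.
set L' := (1 - t) * L.
have L'0 : 0 <= L' by rewrite mulr_ge0 //; lra.
have L'1 : L' <= 1 by rewrite /L'; nra.
have /andP[_ s1] := spindle_axial_le _ _ _ w uu L'0 L'1 spin_w.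
have := spindle_in_lens _ _ _ w uu L'0 L'1 spin_w.
rewrite /in_lens axial_shift // radial_shift // => lens'.
rewrite axial_shift // in s1.
apply: in_lens_spindle => //; first exact: ltW.
rewrite /in_lens axialD.
set s := axial m u w in s1 lens' *; set al := radial m u w in lens' *.
have [h0 hh] := sqrt1_subsqr (ltW L0) L1.
have [h'0 hh'] := sqrt1_subsqr L'0 L'1.
have al0 : 0 <= al by exact: enorm_ge0.
have far2 : r ^+ 2 <= (s - t * L - L') ^+ 2 + al ^+ 2.
  have -> : s - t * L - L' = s - L by rewrite /L'; ring.
  rewrite -dist_axis_sq // -enorm_sq.
  by have := enorm_ge0 (w - (m + L *: u)); nra.
have := lens_shrink_margin L0 L1 t0 t1 r0 al0 h0 h'0 hh hh' s1 lens' far2.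
rewrite subrK => margin.
apply: (@disk_perturb _ s (al + Num.sqrt (1 - L ^+ 2)) _ _ (enorm v)) => //.
- exact: enorm_ge0.
- by rewrite -(mulr1 (enorm v)) -(enorm_unit _ uu) normr_dot_le.
- by rewrite addr_ge0.
- by rewrite addr_ge0 // enorm_ge0.
- by rewrite addrAC lerD2r radialD_le.
- lra.
Qed.

Lemma shifted_subspindle_sub {R : realType} {d : nat} {S : set 'rV[R]_d}
    {x y v : 'rV[R]_d} {t rho : R} :
  x != y -> enorm (x - y) <= 2 -> 0 < t -> t < 1 -> 0 < rho ->
  (forall z, enorm (z - y) < rho -> S z) -> spindle x y `<=` S ->
  enorm v < rho / 2 -> enorm v <= 1 ->
  6 * enorm v <= t * (enorm (y - x) / 2) ^+ 2 * (rho / 2) ->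
  spindle (x + t *: (y - x) + v) (y + v) `<=` S.
Proof.
move=> xy xy2 t0 t1 rho0 ball_y spin_xy v_rho v1 v_small w spin_w.
have [m [u [uu ex ey]]] := spindle_axis x y xy.
move: ex ey v_small; set L := enorm (y - x) / 2 => ex ey v_small.
have L0 : 0 < L by rewrite divr_gt0 // enorm_gt0 // subr_eq0 eq_sym.
have L1 : L <= 1 by rewrite /L -enormBC; lra.
have [near|far] := ltrP (enorm (w - v - y)) (rho / 2).
  apply: ball_y; have -> : w - y = (w - v - y) + v by vec_eq.
  by apply: le_lt_trans (enormD _ _) _; lra.
have -> : w = (w - v) + v by rewrite subrK.
rewrite ex ey in spin_xy; apply: spin_xy.
apply: (spindle_shrink_perturb m u (w - v) v L t (rho / 2)) => //.
- by rewrite divr_gt0.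
- rewrite (_ : m + (t * L) *: u - ((1 - t) * L) *: u = x + t *: (y - x)); last first.
    by rewrite ex ey; vec_eq.
  rewrite (_ : m + (t * L) *: u + ((1 - t) * L) *: u = y); last by rewrite ey; vec_eq.
  exact: spindle_translate.
- by rewrite -ey.
Qed.

Section SpindleApprox.
Context {R : realType} {d : nat}.
Variables (m u : 'rV[R]_d) (L : R).
Implicit Types (c w y : 'rV[R]_d).

Lemma parallelogram_axis c : dot u u = 1 ->
  dot (m - L *: u - c) (m - L *: u - c) + dot (m + L *: u - c) (m + L *: u - c) =
  2 * dot (m - c) (m - c) + 2 * L ^+ 2.
Proof.
move=> uu.
have -> : m - L *: u - c = 1 *: (m - c) + (- L) *: u by vec_eq.
have -> : m + L *: u - c = 1 *: (m - c) + L *: u by vec_eq.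
rewrite !dot_lincomb uu; have -> : m - c = 1 *: (m - c) by rewrite scale1r.
ring.
Qed.

Lemma enorm_axis_end k : dot u u = 1 -> enorm (m + k *: u - m) = `|k|.
Proof.
by move=> uu; rewrite (_ : m + k *: u - m = k *: u) ?enormZ ?enorm_unit ?mulr1 //; vec_eq.
Qed.

Lemma spindle_sub_center_ball w : dot u u = 1 -> 0 <= L -> L <= 1 ->
  spindle (m - L *: u) (m + L *: u) w -> enorm (w - m) <= 1.
Proof.
move=> uu L0 L1 /(spindle_axisE _ _ _ w uu L0 L1) spin; apply/enorm_le1/spin.
- by rewrite -enorm_sq -scaleNr enorm_axis_end // normrN ger0_norm //; nra.
- by rewrite -enorm_sq enorm_axis_end // ger0_norm //; nra.
Qed.

Lemma spindle_center_near c : dot u u = 1 -> 0 <= L -> L <= 1 ->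
  enorm (m - L *: u - c) <= 1 -> enorm (m + L *: u - c) <= 1 ->
  enorm (m - c) <= Num.sqrt (1 - L ^+ 2).
Proof.
move=> uu L0 L1 /enorm_le1 ac /enorm_le1 bc.
have [h0 hh] := sqrt1_subsqr L0 L1.
apply/enorm_leP => //; rewrite hh.
by have := parallelogram_axis c uu; lra.
Qed.

Lemma spindle_contract_le w c (lam : R) : dot u u = 1 -> 0 <= L -> L <= 1 ->
  0 <= lam -> lam <= 1 -> spindle (m - L *: u) (m + L *: u) w ->
  enorm (m - L *: u - c) <= 1 -> enorm (m + L *: u - c) <= 1 ->
  enorm ((1 - lam) *: w + lam *: m - c) <= 1 - lam + lam * Num.sqrt (1 - L ^+ 2).
Proof.
move=> uu L0 L1 lam0 lam1 spin_w xc qc.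
have xq2 : enorm (m - L *: u - (m + L *: u)) <= 2 by rewrite enorm_axis //; lra.
have wc := (spindleE _ _ _ xq2).1 spin_w c xc qc.
have mc := spindle_center_near c uu L0 L1 xc qc.
have -> : (1 - lam) *: w + lam *: m - c = (1 - lam) *: (w - c) + lam *: (m - c) by vec_eq.
apply: le_trans (enorm_conic (1 - lam) lam _ _ _ _) _; try lra.
nra.
Qed.

Lemma spindle_approx_lt1 w lam : dot u u = 1 -> 0 < L -> L < 1 ->
  0 < lam -> lam <= 1 -> spindle (m - L *: u) (m + L *: u) w ->
  exists2 eta, 0 < eta & forall y, enorm (y - (m + L *: u)) <= eta ->
    enorm (m - L *: u - y) <= 2 -> spindle (m - L *: u) y ((1 - lam) *: w + lam *: m).
Proof.
move=> uu L_gt0 L1 lam0 lam1 spin_w; have L0 := ltW L_gt0.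
set x := m - L *: u; set q := m + L *: u; set w' := (1 - lam) *: w + lam *: m.
have xm : enorm (x - m) = L.
  by rewrite /x -scaleNr enorm_axis_end // normrN ger0_norm.
have qm : enorm (q - m) = L by rewrite enorm_axis_end // ger0_norm.
have [h0 hh] := sqrt1_subsqr L0 (ltW L1); set h := Num.sqrt _ in h0 hh.
have h1 : h < 1.
  rewrite ltNge; apply/negP => h1.
  have : 1 <= h ^+ 2 by nra.
  by rewrite hh; nra.
have w'_margin c : enorm (x - c) <= 1 -> enorm (q - c) <= 1 ->
    enorm (w' - c) <= 1 - lam + lam * h.
  exact: spindle_contract_le w c lam uu L0 (ltW L1) (ltW lam0) lam1 spin_w.
set al := lam * (1 - h) / 2.
have al0 : 0 < al by rewrite /al divr_gt0 // mulr_gt0 //; lra.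
have al1 : al <= 1 / 2 by rewrite /al; nra.
exists (al * (1 - L)) => [|y yq xy]; first by rewrite mulr_gt0 //; lra.
apply/spindleE => // c' xc' yc'.
(* pull [c'] towards [m] to get a centre of a unit ball containing [x] and [q] *)
set c := c' + al *: (m - c').
have qc' : enorm (q - c') <= 1 + al * (1 - L).
  by apply: le_trans (enormB_trans q y c') _; rewrite enormBC; lra.
have xc : enorm (x - c) <= 1.
  have -> : x - c = (1 - al) *: (x - c') + al *: (x - m) by rewrite /c; vec_eq.
  by apply: le_trans (enorm_conic (1 - al) al _ _ _ _) _; rewrite ?xm; nra.
have qc : enorm (q - c) <= 1.
  have -> : q - c = (1 - al) *: (q - c') + al *: (q - m) by rewrite /c; vec_eq.
  apply: le_trans (enorm_conic (1 - al) al _ _ _ _) _; rewrite ?qm; try lra.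
  have : (1 - al) * enorm (q - c') <= (1 - al) * (1 + al * (1 - L)).
    by apply: ler_wpM2l; lra.
  have : 0 <= al * (al * (1 - L)) by rewrite !mulr_ge0 //; lra.
  nra.
have cc' : enorm (c - c') <= 2 * al.
  have -> : c - c' = al *: (m - c') by rewrite /c; vec_eq.
  have mc' : enorm (m - c') <= 2.
    by apply: le_trans (enormB_trans m x c') _; rewrite enormBC xm; lra.
  by rewrite enormZ ger0_norm ?[2 * al]mulrC ?ler_wpM2l // ltW.
apply: le_trans (enormB_trans w' c c') _.
by have := w'_margin c xc qc; rewrite /al in cc' *; lra.
Qed.

Lemma spindle_approx_eq1 w lam : dot u u = 1 -> L = 1 ->
  0 < lam -> lam <= 1 -> spindle (m - L *: u) (m + L *: u) w ->
  exists2 eta, 0 < eta & forall y, enorm (y - (m + L *: u)) <= eta ->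
    enorm (m - L *: u - y) <= 2 -> spindle (m - L *: u) y ((1 - lam) *: w + lam *: m).
Proof.
move=> uu L1 lam0 lam1 spin_w.
have wm : enorm (w - m) <= 1.
  by apply: (spindle_sub_center_ball w uu) => //; rewrite L1 ?ler01.
set x := m - L *: u; set q := m + L *: u; set w' := (1 - lam) *: w + lam *: m.
exists (lam ^+ 2 / 4) => [|y yq xy]; first by rewrite divr_gt0 // exprn_gt0.
apply/spindleE => // c' xc' yc'.
have qc' : enorm (q - c') <= 1 + lam ^+ 2 / 4.
  by apply: le_trans (enormB_trans q y c') _; rewrite enormBC; lra.
(* [x] and [q] are antipodal on the unit sphere around [m], so [c'] is near [m] *)
have mc' : enorm (m - c') <= lam.
  apply/enorm_leP; first lra.
  have := parallelogram_axis c' uu; rewrite -/x -/q L1 expr1n.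
  move/enorm_le1: xc' => xc'.
  have : dot (q - c') (q - c') <= (1 + lam ^+ 2 / 4) ^+ 2.
    by rewrite -enorm_sq; have := enorm_ge0 (q - c'); nra.
  have l2 : lam ^+ 2 <= 1 by rewrite exprn_ile1 //; lra.
  have : lam ^+ 2 * lam ^+ 2 <= lam ^+ 2 by rewrite -[leRHS]mulr1 ler_wpM2l ?sqr_ge0.
  nra.
have w'm : enorm (w' - m) <= 1 - lam.
  have -> : w' - m = (1 - lam) *: (w - m) by rewrite /w'; vec_eq.
  by rewrite enormZ ger0_norm; nra.
by apply: le_trans (enormB_trans w' m c') _; lra.
Qed.

End SpindleApprox.

Lemma spindle_approx {R : realType} {d : nat} {x q w : 'rV[R]_d} {lam : R} :
  x != q -> enorm (x - q) <= 2 -> spindle x q w -> 0 < lam -> lam <= 1 ->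
  exists w', enorm (w' - w) <= lam /\
    exists2 eta, 0 < eta & forall y, enorm (y - q) <= eta ->
      enorm (x - y) <= 2 -> spindle x y w'.
Proof.
move=> xq xq2 spin_w lam0 lam1.
have [m [u [uu ex ey]]] := spindle_axis x q xq.
move: ex ey; set L := enorm (q - x) / 2 => ex ey.
have L0 : 0 < L by rewrite divr_gt0 // enorm_gt0 // subr_eq0 eq_sym.
have L1 : L <= 1 by rewrite /L -enormBC; lra.
rewrite ex ey in spin_w *.
exists ((1 - lam) *: w + lam *: m); split.
  have -> : (1 - lam) *: w + lam *: m - w = lam *: (m - w) by vec_eq.
  have := spindle_sub_center_ball _ _ _ _ uu (ltW L0) L1 spin_w.
  by rewrite enormZ ger0_norm ?(ltW lam0) // enormBC; nra.
have [L_lt1|L_ge1] := ltrP L 1.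
- exact: spindle_approx_lt1.
- by apply: spindle_approx_eq1 => //; apply/le_anti; rewrite L1.
Qed.

Section EuclideanBalls.
Context {R : realType} {d : nat}.
Implicit Types (y z : 'rV[R]_d) (T U : set 'rV[R]_d).

Lemma normr_entry_le_enorm (v : 'rV[R]_d) i : `|v ord0 i| <= enorm v.
Proof.
rewrite enormE -sqrtr_sqr; apply: ler_wsqrtr.
rewrite /dot (bigD1 i) //= -expr2 lerDl.
by apply: sumr_ge0 => j _; rewrite -expr2 sqr_ge0.
Qed.

Lemma nbhs_enorm_ball {y U} : nbhs y U ->
  exists2 r, 0 < r & forall z, enorm (z - y) < r -> U z.
Proof.
move/nbhs_ballP => [e e0 yU]; exists e => // z zy; apply: yU.
rewrite -ball_normE /= /Num.norm /= mx_normrE; apply/bigmax_ltP; split => // -[i j] _.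
rewrite /= !mxE (ord1 i) distrC; apply: le_lt_trans zy.
by have := normr_entry_le_enorm (z - y) j; rewrite !mxE.
Qed.

(* [enorm v <= sqrt d * (sup norm of v) < (d + 1) * (sup norm of v)] *)
Lemma enorm_ball_nbhs y r : 0 < r -> nbhs y [set z | enorm (z - y) < r].
Proof.
move=> r0; set e := r / (d.+1)%:R.
have e0 : 0 < e by rewrite divr_gt0 // ltr0n.
apply/nbhs_ballP; exists e => // z.
rewrite -ball_normE /= /Num.norm /= mx_normrE => /bigmax_ltP [_ ze].
have ze2 i : (z ord0 i - y ord0 i) ^+ 2 <= e ^+ 2.
  by have := ze (ord0, i) isT; rewrite /= !mxE distrC ltr_norml => /andP[]; nra.
apply/enorm_ltP; first exact: ltW.
have -> : dot (z - y) (z - y) = \sum_(i < d) (z ord0 i - y ord0 i) ^+ 2.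
  by apply: eq_bigr => i _; rewrite !mxE expr2.
apply: le_lt_trans (ler_sum _ (fun i _ => ze2 i)) _.
rewrite sumr_const card_ord -mulr_natr.
have er : e * (d.+1)%:R = r by rewrite /e mulfVK // pnatr_eq0.
have dd : (d%:R : R) < ((d.+1)%:R) ^+ 2 by rewrite -natrX ltr_nat; lia.
have rr : r ^+ 2 = e ^+ 2 * (d.+1)%:R ^+ 2 by rewrite -exprMn er.
by rewrite rr ltr_pM2l // exprn_gt0.
Qed.

Lemma closure_enorm_ball {T y r} : closure T y -> 0 < r ->
  exists z, T z /\ enorm (z - y) < r.
Proof. by move=> Ty r0; have [z [Tz zy]] := Ty _ (enorm_ball_nbhs y r r0); exists z. Qed.

End EuclideanBalls.

Section Connectedness.
Context {R : realType} {d : nat}.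

Definition locally_const_at (P : 'rV[R]_d -> Prop) (y : 'rV[R]_d) :=
  exists2 eps, 0 < eps & forall y0 z,
    enorm (y0 - y) < eps -> enorm (z - y) < eps -> P y0 -> P z.

Lemma connected_locally_const (I : set 'rV[R]_d) (P : 'rV[R]_d -> Prop) :
  open I -> connected I -> (forall y, I y -> locally_const_at P y) ->
  (exists y, I y /\ P y) -> forall y, I y -> P y.
Proof.
move=> oI cI lcP [y0 [Iy0 Py0]].
suff -> : I = [set y | I y /\ P y] by move=> y [].
apply/esym/cI; first by exists y0.
- exists [set y | I y /\ P y]; last by apply/seteqP; split=> [y [Iy Py]|y [_ []]].
  rewrite openE => y [Iy Py]; have [e e0 lc] := lcP y Iy.
  have [r r0 rI] := nbhs_enorm_ball (oI y Iy).
  have er0 : 0 < Order.min e r by rewrite lt_min e0 r0.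
  apply: filterS (enorm_ball_nbhs y _ er0) => z /=; rewrite lt_min => /andP[ze zr].
  by split; [exact: rI | apply: (lc y) => //; rewrite subrr enorm0].
- exists (closure [set y | I y /\ P y]); first exact: closed_closure.
  apply/seteqP; split=> [y [Iy Py]|y [Iy cly]]; first by split; last exact: subset_closure.
  have [e e0 lc] := lcP y Iy.
  have [z [[_ Pz] zy]] := closure_enorm_ball cly e0.
  by split; last by apply: (lc z) => //; rewrite subrr enorm0.
Qed.

End Connectedness.

Section SpindleStar.
Context {R : realType} {d : nat}.
Implicit Types (S T : set 'rV[R]_d) (p q x y z w : 'rV[R]_d).

Lemma spindle_sub_dist_le2 {S p q} : S <> setT -> spindle p q `<=` S -> enorm (p - q) <= 2.
Proof.
move=> ST pqS; apply/negPn/negP => far; apply: ST.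
by apply/seteqP; split=> // z _; apply: pqS; rewrite (spindle_far _ _ far).
Qed.

Lemma spindle_refl_sub S p : S p -> spindle p p `<=` S.
Proof. by move=> Sp w /spindle_refl ->. Qed.

Lemma spindle_sub_of_ball {S x z r} : (forall w, enorm (w - x) < r -> S w) ->
  enorm (z - x) < r -> enorm (z - x) <= 1 -> spindle x z `<=` S.
Proof.
move=> ball_x zr z1 w spin_w; apply: ball_x; apply: le_lt_trans zr.
apply: (spindle_sub_ball x z x _ w (enorm_ge0 _) z1 _ (lexx _) spin_w).
by rewrite subrr enorm0 enorm_ge0.
Qed.

Lemma dist_le2_closure {T x q} : closure T q ->
  (forall y, T y -> enorm (x - y) <= 2) -> enorm (x - q) <= 2.
Proof.
move=> Tq T2; rewrite leNgt; apply/negP => far.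
have gap : 0 < enorm (x - q) - 2 by lra.
have [y [Ty yq]] := closure_enorm_ball Tq gap.
by have := T2 y Ty; have := enormB_trans x y q; lra.
Qed.

Lemma spindle_sub_closure {S T x q} : closed S -> closure T q -> x != q ->
  enorm (x - q) <= 2 -> (forall y, T y -> spindle x y `<=` S) ->
  (forall y, T y -> enorm (x - y) <= 2) -> spindle x q `<=` S.
Proof.
move=> clS Tq xq xq2 TS T2 w spin_w; rewrite (closure_id S).1 //.
move=> B /nbhs_enorm_ball [e e0 eB].
set lam := Order.min (e / 2) 1.
have lam0 : 0 < lam by rewrite lt_min; apply/andP; split; lra.
have lam1 : lam <= 1 by rewrite ge_min lexx orbT.
have lam_e : lam <= e / 2 by rewrite ge_min lexx.
have [w' [w'w [eta eta0 near_q]]] := spindle_approx xq xq2 spin_w lam0 lam1.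
have [y [Ty yq]] := closure_enorm_ball Tq eta0.
exists w'; split; first by apply: (TS y Ty); apply: near_q; [exact: ltW | exact: T2].
by apply: eB; lra.
Qed.

End SpindleStar.

Section Peak.
Context {R : realType} {d : nat}.
Implicit Types (S : set 'rV[R]_d) (p q x y z w : 'rV[R]_d).

Definition spindle_peak_within S x (rU : R) := forall x' q,
  enorm (x' - x) < rU -> S x' -> S q -> spindle x' q `<=` S -> spindle x q `<=` S.

Lemma spindle_peak_withinP {S x} : spindle_peak S x ->
  exists2 rU, 0 < rU & spindle_peak_within S x rU.
Proof.
move=> [_ [U [/nbhs_enorm_ball [rU rU0 xU] peak]]]; exists rU => // x' q x'x Sx' Sq x'q.
by have [] := peak x' (xU _ x'x) Sx' q (conj Sq x'q).
Qed.

Lemma peak_spindle_extend {S x rU y v t rho} :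
  spindle_peak_within S x rU -> S <> setT -> x != y ->
  0 < t -> t <= 1 / 2 -> t <= rU / 4 -> 0 < rho ->
  (forall z, enorm (z - y) < rho -> S z) -> spindle x y `<=` S ->
  enorm v < rho / 2 -> enorm v <= 1 -> enorm v < rU / 2 ->
  6 * enorm v <= t * (enorm (y - x) / 2) ^+ 2 * (rho / 2) ->
  spindle x (y + v) `<=` S.
Proof.
move=> peak ST xy t0 t1 tU rho0 ball_y xyS v_rho v1 vU v_small.
have xy2 := spindle_sub_dist_le2 ST xyS.
have x'S := shifted_subspindle_sub xy xy2 t0 ltac:(lra) rho0 ball_y xyS v_rho v1 v_small.
set x' := x + t *: (y - x) + v in x'S.
apply: (peak x') => //.
- have -> : x' - x = t *: (y - x) + v by rewrite /x'; vec_eq.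
  apply: le_lt_trans (enormD _ _) _; rewrite enormZ ger0_norm ?ltW // enormBC.
  have : t * enorm (x - y) <= t * 2 by apply: ler_wpM2l; [exact: ltW | exact: xy2].
  lra.
- apply/x'S/spindle_l.
  have -> : x' - (y + v) = (1 - t) *: (x - y) by rewrite /x'; vec_eq.
  by rewrite enormZ ger0_norm; [nra | lra].
- by apply: ball_y; rewrite addrAC subrr add0r; lra.
Qed.

Lemma star_locally_const_at_center {S x r} : 0 < r ->
  (forall z, enorm (z - x) < r -> S z) -> locally_const_at (fun z => spindle x z `<=` S) x.
Proof.
move=> r0 ball_x; exists (Order.min r 1) => [|y0 z _ zx _]; first by rewrite lt_min r0 ltr01.
by move: zx; rewrite lt_min => /andP[? ?]; apply: (spindle_sub_of_ball ball_x); lra.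
Qed.

Lemma star_locally_const_off_center {S x rU y r} :
  0 < rU -> spindle_peak_within S x rU -> S <> setT -> x != y -> 0 < r ->
  (forall z, enorm (z - y) < r -> S z) -> locally_const_at (fun z => spindle x z `<=` S) y.
Proof.
move=> rU0 peak ST xy r0 ball_y.
set L := enorm (y - x) / 2.
have L0 : 0 < L by rewrite divr_gt0 // enorm_gt0 // subr_eq0 eq_sym.
set t := Order.min (1 / 2) (rU / 4).
have t0 : 0 < t by rewrite lt_min; apply/andP; split; lra.
have t1 : t <= 1 / 2 by rewrite ge_min lexx.
have tU : t <= rU / 4 by rewrite ge_min lexx orbT.
have tLr : 0 < t * L ^+ 2 * r / 192.
  by apply: divr_gt0 => //; apply: mulr_gt0 => //; apply: mulr_gt0 => //; exact: exprn_gt0.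
set eps := Order.min (Order.min (r / 8) (1 / 2))
                     (Order.min (t * L ^+ 2 * r / 192) (Order.min (rU / 8) L)).
have eps0 : 0 < eps.
  by rewrite !lt_min tLr L0 !divr_gt0 ?ltr01 ?ltr0n.
have e_r : eps <= r / 8 by rewrite !ge_min lexx.
have e_1 : eps <= 1 / 2 by rewrite !ge_min lexx ?orbT.
have e_tLr : eps <= t * L ^+ 2 * r / 192 by rewrite !ge_min lexx ?orbT.
have e_U : eps <= rU / 8 by rewrite !ge_min lexx ?orbT.
have e_L : eps <= L by rewrite !ge_min lexx ?orbT.
exists eps => // y0 z y0y zy xy0S.
have L_y0 : L <= enorm (y0 - x).
  have := enormB_trans y y0 x; rewrite (enormBC y y0).
  have : enorm (y - x) = 2 * L by rewrite /L; field.
  lra.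
have xy0 : x != y0.
  by apply: contraTneq L_y0 => <-; rewrite subrr enorm0 -ltNge.
have v2eps : enorm (z - y0) < 2 * eps.
  have -> : z - y0 = (z - y) + (y - y0) by rewrite addrA subrK.
  by apply: le_lt_trans (enormD _ _) _; rewrite (enormBC y y0); lra.
have -> : z = y0 + (z - y0) by rewrite addrC subrK.
have r2 : 0 < r / 2 by lra.
apply: (peak_spindle_extend peak ST xy0 t0 t1 tU r2) => //; try lra.
- move=> w wy0; apply: ball_y.
  by apply: le_lt_trans (enormB_trans w y0 y) _; lra.
- have L_sq : L ^+ 2 / 4 <= (enorm (y0 - x) / 2) ^+ 2.
    by have := enorm_ge0 (y0 - x); nra.
  have : t * (L ^+ 2 / 4) * (r / 2 / 2) <= t * (enorm (y0 - x) / 2) ^+ 2 * (r / 2 / 2).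
    by apply: ler_wpM2r; [lra | apply: ler_wpM2l => //; exact: ltW].
  have -> : t * (L ^+ 2 / 4) * (r / 2 / 2) = t * L ^+ 2 * r / 16 by field.
  lra.
Qed.

Lemma peak_star_interior {S x rU} :
  0 < rU -> spindle_peak_within S x rU -> S <> setT -> S x ->
  closure (interior S) = S -> connected (interior S) ->
  forall y, interior S y -> spindle x y `<=` S.
Proof.
move=> rU0 peak ST Sx Scl Icon.
apply: (connected_locally_const _ (fun y => spindle x y `<=` S) (open_interior S) Icon).
  move=> y Iy.
  have [r r0 ball_y] := @nbhs_enorm_ball _ _ _ _ Iy.
  have [->|xy] := eqVneq x y; first exact: star_locally_const_at_center r0 ball_y.
  exact: star_locally_const_off_center rU0 peak ST xy r0 ball_y.
have xcl : closure (interior S) x by rewrite Scl.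
have [y [Iy yx]] := closure_enorm_ball xcl rU0.
have Sy : S y by exact: interior_subset.
by exists y; split => //; apply: (peak y y) => //; exact: spindle_refl_sub.
Qed.

End Peak.

Theorem theorem4 (R : realType) (d : nat) (S : set 'rV[R]_d) (x : 'rV[R]_d) :
  compact S -> closure (interior S) = S -> connected (interior S) ->
  spindle_peak S x ->
  spindle_ker S x /\ spindle_starshaped S.
Proof.
move=> _ Scl Icon peak_x; have Sx := peak_x.1.
have [rU rU0 peak] := spindle_peak_withinP peak_x.
suff ker : spindle_ker S x by split => //; exists x.
split => //; apply/seteqP; split => [q [] // | q Sq]; split => //.
have [-> | ST] := pselect (S = setT); first by [].
have intS := peak_star_interior rU0 peak ST Sx Scl Icon.
have [-> | qx] := eqVneq q x; first exact: spindle_refl_sub.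
have qcl : closure (interior S) q by rewrite Scl.
have int2 y : interior S y -> enorm (x - y) <= 2.
  by move=> Iy; exact: spindle_sub_dist_le2 ST (intS y Iy).
apply: (spindle_sub_closure _ qcl) => //.
- by rewrite -Scl; exact: closed_closure.
- by rewrite eq_sym.
- exact: dist_le2_closure qcl int2.
Qed.
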